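(* Let $(E,f)$ be a polymatroid that admits a tensor product with the uniform matroid $U_{2,3}$. Then $(E,f)$ is $1$-CI; that is, for every pair $(X,Y)$ of subsets of $E$ there exist a finite set $Z$ with $Z\cap E=\emptyset$ and a polymatroid $(E\cup Z, h)$ with $h(S)=f(S)$ for all $S\subseteq E$, such that $h(Z)=f(X)+f(Y)-f(X\cup Y)$, $h(X\cup Z)=h(X)$ and $h(Y\cup Z)=h(Y)$.
   Context: A polymatroid $(E,f)$ consists of a finite ground set $E$ and a function $f\colon 2^E\to\mathbb{R}$ with $f(\emptyset)=0$ that is monotone ($S\subseteq T\Rightarrow f(S)\le f(T)$) and submodular ($f(S)+f(T)\ge f(S\cup T)+f(S\cap T)$). The uniform matroid $U_{2,3}$ is the polymatroid on $\{1,2,3\}$ with rank function $r(T)=\min\{|T|,2\}$. A tensor product of polymatroids $(E_1,f_1)$ and $(E_2,f_2)$ is a polymatroid $(E_1\times E_2,g)$ such that $g(S\times T)=f_1(S)f_2(T)$ for all $S\subseteq E_1$, $T\subseteq E_2$. An extension $(E\cup Z,h)$ of $(E,f)$ (with $Z\cap E=\emptyset$) in which $h(Z)=f(X)+f(Y)-f(X\cup Y)$ and $h(X\cup Z)=h(X)$, $h(Y\cup Z)=h(Y)$ is called a common information extension for the pair $(X,Y)$. A polymatroid is called $1$-CI if it admits a common information extension for every pair of subsets of its ground set. *)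

From mathcomp Require Import all_boot all_order all_algebra.
From mathcomp Require Import reals.
Set Implicit Arguments. Unset Strict Implicit. Unset Printing Implicit Defensive.
Import Order.TTheory GRing.Theory Num.Theory.
Local Open Scope ring_scope.

Definition polymatroid (R : realType) (T : finType) (f : {set T} -> R) : Prop :=
  [/\ f set0 = 0,
      (forall S U : {set T}, S \subset U -> f S <= f U) &
      (forall S U : {set T}, f (S :|: U) + f (S :&: U) <= f S + f U)].

Definition rank_U23 (R : realType) (T : {set 'I_3}) : R := (minn #|T| 2)%:R.

Definition has_tensor_U23 (R : realType) (E : finType) (f : {set E} -> R) : Prop :=
  exists g : {set (E * 'I_3)%type} -> R,
    polymatroid g /\
    forall (S : {set E}) (T : {set 'I_3}), g (setX S T) = f S * rank_U23 R T.

Definition CI_extension (R : realType) (E : finType) (f : {set E} -> R)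
    (X Y : {set E}) : Prop :=
  exists (Z : finType) (h : {set (E + Z)%type} -> R),
    let emb (S : {set E}) : {set (E + Z)%type} := [set inl x | x in S] in
    let Zs : {set (E + Z)%type} := [set inr z | z : Z] in
    [/\ polymatroid h,
        (forall S : {set E}, h (emb S) = f S),
        h Zs = f X + f Y - f (X :|: Y),
        h (emb X :|: Zs) = h (emb X) &
        h (emb Y :|: Zs) = h (emb Y)].

Definition one_CI (R : realType) (E : finType) (f : {set E} -> R) : Prop :=
  forall X Y : {set E}, CI_extension f X Y.

From mathcomp Require Import all_boot all_order all_algebra.
From mathcomp Require Import reals.
From mathcomp Require Import lra.
Set Implicit Arguments. Unset Strict Implicit. Unset Printing Implicit Defensive.
Import Order.TTheory GRing.Theory Num.Theory.
Local Open Scope ring_scope.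

(* Let g be a tensor product of f with U_{2,3} on E x {0,1,2} and write A_i for
   the copy A x {i} of A.  Since U_{2,3} has rank 1 on points and 2 on larger
   sets, submodularity of g pins down g (A_i :|: B_j) = f A + f B for i != j and
   g (A_i :|: A_j :|: B_k) = f A + f (A :|: B) for distinct i, j, k.  The copies
   X_1 and Y_2 then serve as the common information of X and Y: adjoin a single
   point z to E and set h (S + z) := g (S_0 :|: X_1 :|: Y_2) - f (X :|: Y).
   The polymatroid axioms of h reduce to those of g, while the two formulas
   above give h z = f X + f Y - f (X :|: Y), h (X + z) = f X and h (Y + z) = f Y. *)

Section PolymatroidAxioms.
Variables (R : realType) (T : finType) (f : {set T} -> R).
Hypothesis f_poly : polymatroid f.

Lemma polymatroid0 : f set0 = 0.
Proof. by case: f_poly. Qed.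

Lemma polymatroid_mono (S U : {set T}) : S \subset U -> f S <= f U.
Proof. by case: f_poly => _ + _; apply. Qed.

Lemma polymatroid_submod (S U : {set T}) : f (S :|: U) + f (S :&: U) <= f S + f U.
Proof. by case: f_poly => _ _; apply. Qed.

End PolymatroidAxioms.

Section OnePointExtension.
Variables (R : realType) (T : finType) (f G : {set T} -> R).

Definition one_point_ext (A : {set T + unit}) : R :=
  if inr tt \in A then G (inl @^-1: A) else f (inl @^-1: A).

Lemma preimset_inl_imset (S : {set T}) : inl @^-1: (inl @: S : {set T + unit}) = S.
Proof. by apply/setP => x; rewrite inE mem_imset //; apply: inl_inj. Qed.

Lemma one_point_ext_inl (S : {set T}) : one_point_ext (inl @: S) = f S.
Proof.
by rewrite /one_point_ext preimset_inl_imset; case: imsetP => // -[].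
Qed.

Lemma one_point_ext_inr (S : {set T}) :
  one_point_ext (inl @: S :|: [set inr z | z : unit]) = G S.
Proof.
rewrite /one_point_ext preimsetU preimset_inl_imset !inE imset_f //= orbT.
by congr G; apply/setP => x; rewrite !inE; apply/orb_idr => /imsetP[].
Qed.

Hypotheses (f_poly : polymatroid f)
  (G_mono : forall S U : {set T}, S \subset U -> G S <= G U)
  (G_submod : forall S U : {set T}, G (S :|: U) + G (S :&: U) <= G S + G U)
  (G_f_submod : forall S U : {set T}, G (S :|: U) + f (S :&: U) <= f S + G U)
  (f_le_G : forall S : {set T}, f S <= G S).

Lemma one_point_ext_polymatroid : polymatroid one_point_ext.
Proof.
split.
- by rewrite /one_point_ext inE preimset0 polymatroid0.
- move=> A B sAB; have sAB' := preimsetS inl sAB.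
  rewrite /one_point_ext; case: ifP => [zA|_]; first by rewrite (subsetP sAB _ zA) G_mono.
  case: ifP => _; last exact: polymatroid_mono.
  exact: le_trans (polymatroid_mono f_poly sAB') (f_le_G _).
- move=> A B; rewrite /one_point_ext preimsetU preimsetI !inE.
  case: (inr tt \in A); case: (inr tt \in B) => /=.
  + exact: G_submod.
  + by rewrite setUC setIC [X in _ <= X]addrC G_f_submod.
  + exact: G_f_submod.
  + exact: polymatroid_submod.
Qed.

End OnePointExtension.

(* Proves identities and inclusions between unions of slices [setX A [set i]]
   pointwise; the index cases rely on the hypotheses [i != j] in the context. *)
Ltac slices_by_cases :=
  let x := fresh "x" in let l := fresh "l" in
  first [apply/setP => -[x l] | apply/subsetP => -[x l]; apply/implyP];
  rewrite !inE /=;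
  repeat match goal with |- context [@eq_op _ l ?i] =>
    let e := fresh "e" in case: (eqVneq l i) => [e|?]; [rewrite ?e|]
  end;
  repeat match goal with
  | H : is_true (?a != ?b) |- context [?a == ?b] => rewrite (negbTE H)
  | H : is_true (?a != ?b) |- context [?b == ?a] => rewrite (eq_sym b a) (negbTE H)
  end;
  repeat match goal with |- context [?y \in ?A] => case: (y \in A) end.

Section TensorWithU23.
Variables (R : realType) (E : finType) (f : {set E} -> R).
Variable g : {set E * 'I_3} -> R.
Hypotheses (g_poly : polymatroid g)
  (g_tensor : forall (S : {set E}) (T : {set 'I_3}), g (setX S T) = f S * rank_U23 R T).

Lemma tensor_slice (S : {set E}) (i : 'I_3) : g (setX S [set i]) = f S.
Proof. by rewrite g_tensor /rank_U23 cards1 mulr1. Qed.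

Lemma tensor_setX_card_gt1 (S : {set E}) (T : {set 'I_3}) :
  (1 < #|T|)%N -> g (setX S T) = f S *+ 2.
Proof. by move=> T_gt1; rewrite g_tensor /rank_U23 (minn_idPr T_gt1) mulr_natr. Qed.

Lemma tensor_two_slices (A B : {set E}) (i j : 'I_3) : i != j ->
  g (setX A [set i] :|: setX B [set j]) = f A + f B.
Proof.
move=> ij; apply/eqP; rewrite eq_le; apply/andP; split.
  have := polymatroid_submod g_poly (setX A [set i]) (setX B [set j]).
  have -> : setX A [set i] :&: setX B [set j] = set0 by slices_by_cases.
  by rewrite polymatroid0 // addr0 !tensor_slice.
have := polymatroid_submod g_poly (setX A [set i] :|: setX B [set j])
                                  (setX (A :|: B) [set j]).
have -> : (setX A [set i] :|: setX B [set j]) :|: setX (A :|: B) [set j]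
        = setX A [set i] :|: setX (A :|: B) [set j] by slices_by_cases.
have -> : (setX A [set i] :|: setX B [set j]) :&: setX (A :|: B) [set j]
        = setX B [set j] by slices_by_cases.
have := polymatroid_submod g_poly (setX A [set i] :|: setX (A :|: B) [set j])
                                  (setX (A :|: B) [set i]).
have -> : (setX A [set i] :|: setX (A :|: B) [set j]) :|: setX (A :|: B) [set i]
        = setX (A :|: B) [set i; j] by slices_by_cases.
have -> : (setX A [set i] :|: setX (A :|: B) [set j]) :&: setX (A :|: B) [set i]
        = setX A [set i] by slices_by_cases.
rewrite tensor_setX_card_gt1 ?cards2 ?ij // !tensor_slice; lra.
Qed.

Section PairSlice.
Variables (i j k : 'I_3).
Hypotheses (ij : i != j) (ik : i != k) (jk : j != k).

Let g_ijk (A : {set E}) : g (setX A [set i; j; k]) = f A *+ 2.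
Proof.
apply: tensor_setX_card_gt1.
by rewrite (leq_trans _ (subset_leq_card (subsetUl [set i; j] [set k]))) // cards2 ij.
Qed.

Let g_ij (A : {set E}) : g (setX A [set i; j]) = f A *+ 2.
Proof. by rewrite tensor_setX_card_gt1 // cards2 ij. Qed.

Let tensor_pair_slice_absorb (A B : {set E}) :
  g (setX A [set i; j] :|: setX (A :|: B) [set k]) = f A + f (A :|: B).
Proof.
apply/eqP; rewrite eq_le; apply/andP; split.
  have := polymatroid_submod g_poly (setX A [set i; j; k]) (setX (A :|: B) [set k]).
  have -> : setX A [set i; j; k] :|: setX (A :|: B) [set k]
          = setX A [set i; j] :|: setX (A :|: B) [set k] by slices_by_cases.
  have -> : setX A [set i; j; k] :&: setX (A :|: B) [set k] = setX A [set k].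
    by slices_by_cases.
  rewrite g_ijk !tensor_slice; lra.
rewrite -(tensor_two_slices _ _ ik); apply: (polymatroid_mono g_poly).
by slices_by_cases.
Qed.

Lemma tensor_pair_slice (A B : {set E}) :
  g (setX A [set i; j] :|: setX B [set k]) = f A + f (A :|: B).
Proof.
rewrite -tensor_pair_slice_absorb; apply/eqP; rewrite eq_le; apply/andP; split.
  by apply: (polymatroid_mono g_poly); slices_by_cases.
have := polymatroid_submod g_poly (setX A [set i; j] :|: setX B [set k])
                                  (setX A [set i; j; k]).
have -> : (setX A [set i; j] :|: setX B [set k]) :|: setX A [set i; j; k]
        = setX A [set i; j] :|: setX (A :|: B) [set k] by slices_by_cases.
have : g (setX A [set i; j])
       <= g ((setX A [set i; j] :|: setX B [set k]) :&: setX A [set i; j; k]).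
  by apply: (polymatroid_mono g_poly); slices_by_cases.
rewrite g_ij g_ijk; lra.
Qed.

End PairSlice.

Section CommonInformation.
Variables (X Y : {set E}) (i j k : 'I_3).
Hypotheses (ij : i != j) (ik : i != k) (jk : j != k).
Let ji : j != i. Proof. by rewrite eq_sym. Qed.
Let ki : k != i. Proof. by rewrite eq_sym. Qed.
Let kj : k != j. Proof. by rewrite eq_sym. Qed.

Local Notation lifted S := (setX S [set i] :|: setX X [set j] :|: setX Y [set k]).

Definition ci_lift (S : {set E}) : R := g (lifted S) - f (X :|: Y).

Lemma ci_lift_mono (S U : {set E}) : S \subset U -> ci_lift S <= ci_lift U.
Proof.
move=> sSU; rewrite lerD2r; apply: (polymatroid_mono g_poly).
by rewrite -!setUA setUSS // setXS.
Qed.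

Lemma ci_lift_submod (S U : {set E}) :
  ci_lift (S :|: U) + ci_lift (S :&: U) <= ci_lift S + ci_lift U.
Proof.
have := polymatroid_submod g_poly (lifted S) (lifted U).
have -> : lifted S :|: lifted U = lifted (S :|: U) by slices_by_cases.
have -> : lifted S :&: lifted U = lifted (S :&: U) by slices_by_cases.
rewrite /ci_lift; lra.
Qed.

Lemma ci_lift_f_submod (S U : {set E}) :
  ci_lift (S :|: U) + f (S :&: U) <= f S + ci_lift U.
Proof.
have := polymatroid_submod g_poly (setX S [set i]) (lifted U).
have -> : setX S [set i] :|: lifted U = lifted (S :|: U) by slices_by_cases.
have -> : setX S [set i] :&: lifted U = setX (S :&: U) [set i] by slices_by_cases.
rewrite /ci_lift !tensor_slice; lra.
Qed.

Lemma f_le_ci_lift_setT : f setT <= ci_lift setT.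
Proof.
have := polymatroid_submod g_poly (lifted setT) (setX Y [set j; k] :|: setX setT [set i]).
have -> : lifted setT :|: (setX Y [set j; k] :|: setX setT [set i])
        = setX setT [set i] :|: setX (X :|: Y) [set j] :|: setX Y [set k].
  by slices_by_cases.
have -> : lifted setT :&: (setX Y [set j; k] :|: setX setT [set i])
        = setX setT [set i] :|: setX (X :&: Y) [set j] :|: setX Y [set k].
  by slices_by_cases.
have := tensor_pair_slice jk ji ki Y setT.
have : g (setX setT [set i] :|: setX (X :|: Y) [set j])
       <= g (setX setT [set i] :|: setX (X :|: Y) [set j] :|: setX Y [set k]).
  by apply: (polymatroid_mono g_poly); rewrite subsetUl.
have : g (setX setT [set i] :|: setX Y [set k])
       <= g (setX setT [set i] :|: setX (X :&: Y) [set j] :|: setX Y [set k]).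
  by apply: (polymatroid_mono g_poly); slices_by_cases.
rewrite !tensor_two_slices // setUT /ci_lift; lra.
Qed.

Lemma f_le_ci_lift (S : {set E}) : f S <= ci_lift S.
Proof.
have := polymatroid_submod g_poly (lifted S) (setX setT [set i]).
have -> : lifted S :|: setX setT [set i] = lifted setT by slices_by_cases.
have -> : lifted S :&: setX setT [set i] = setX S [set i] by slices_by_cases.
have := f_le_ci_lift_setT; rewrite /ci_lift !tensor_slice; lra.
Qed.

Lemma ci_lift0 : ci_lift set0 = f X + f Y - f (X :|: Y).
Proof.
rewrite /ci_lift -(tensor_two_slices _ _ jk); congr (g _ - _).
by slices_by_cases.
Qed.

Lemma ci_liftX : ci_lift X = f X.
Proof.
rewrite /ci_lift.
have -> : lifted X = setX X [set i; j] :|: setX Y [set k] by slices_by_cases.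
by rewrite tensor_pair_slice // addrK.
Qed.

Lemma ci_liftY : ci_lift Y = f Y.
Proof.
rewrite /ci_lift.
have -> : lifted Y = setX Y [set i; k] :|: setX X [set j] by slices_by_cases.
by rewrite tensor_pair_slice // setUC addrK.
Qed.

End CommonInformation.

End TensorWithU23.

Theorem theorem5p1 (R : realType) (E : finType) (f : {set E} -> R) :
  polymatroid f -> has_tensor_U23 f -> one_CI f.
Proof.
move=> f_poly [g [g_poly g_tensor]] X Y.
pose i : 'I_3 := 0; pose j : 'I_3 := 1; pose k : 'I_3 := 2%:R.
have [ij ik jk] : [/\ i != j, i != k & j != k] by [].
exists unit, (one_point_ext f (ci_lift f g X Y i j k)) => /=.
have Zs_emb0 : [set inr z | z : unit] = inl @: (set0 : {set E}) :|: [set inr z | z : unit].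
  by rewrite imset0 set0U.
split.
- apply: one_point_ext_polymatroid => //.
  + exact: ci_lift_mono.
  + exact: ci_lift_submod.
  + exact: ci_lift_f_submod.
  + exact: f_le_ci_lift.
- exact: one_point_ext_inl.
- by rewrite Zs_emb0 one_point_ext_inr ci_lift0.
- by rewrite one_point_ext_inr one_point_ext_inl ci_liftX.
- by rewrite one_point_ext_inr one_point_ext_inl ci_liftY.
Qed.
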